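(* Let $X$ be a finite set of proposals with $m=|X|$. Let $s$ be a normalised positional scoring function given by a scoring vector $(s_1,\ldots,s_m)\in\mathbb{R}^m$, and let $p$ be any array of probability distributions $p_{R,x}$. Then the score-based DSF $\Delta^p_s$ satisfies Weak Position Unanimity: for every profile $R$ and every proposal $x$ that occurs in the same position in every agent's ranking in $R$, either $x\notin\Delta^p_s(R)$ or $\Delta^p_s(R)=X$.
   Context: Let $X!$ be the set of strict linear orders on $X$. A profile is a function $R:N\to X!$ with $N\subset\mathbb{N}$ finite and nonempty; a DSF maps every profile to a nonempty subset of $X$. For $i\in N$, $\mathit{pos}^R_i(x)=1+|\{y\in X: y \text{ is ranked above } x \text{ by } R_i\}|$. For $C\subseteq N$, $R{\restriction_C}$ is the restriction of $R$ to $C$, and $\overline{C}=N\setminus C$. The normalised positional scoring function with vector $(s_1,\ldots,s_m)$ assigns, for nonempty $C\subseteq N$, $s(R{\restriction_C},x)=\frac{1}{|C|}\sum_{i\in C} s_{\mathit{pos}^R_i(x)}$. Define $\mathit{div}_s(R,x,C,\overline{C})=|s(R{\restriction_C},x)-s(R{\restriction_{\overline{C}}},x)|$ if $C$ and $\overline{C}$ are both nonempty, and $0$ otherwise. For each profile $R:N\to X!$ and proposal $x$, $p_{R,x}$ is a probability distribution on unordered decompositions $\{C,\overline{C}\}$ of $N$ into two complementary subsets. The score-based DSF is $\Delta^p_s(R)=\arg\max_{x\in X}\sum_{\{C,\overline{C}\}} p_{R,x}(\{C,\overline{C}\})\cdot \mathit{div}_s(R,x,C,\overline{C})$. *)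

From HB Require Import structures.
From mathcomp Require Import all_boot all_order all_algebra.
From mathcomp Require Import finmap.
Set Implicit Arguments. Unset Strict Implicit. Unset Printing Implicit Defensive.
Import Order.TTheory GRing.Theory Num.Theory.
Local Open Scope fset_scope.
Local Open Scope ring_scope.

(* A strict linear order on X, given as a relation: [r y x] means
   "y is ranked above x". *)
Definition strict_linear_order (X : finType) (r : rel X) : Prop :=
  [/\ irreflexive r, transitive r & forall x y, x != y -> r x y || r y x].

(* A profile: a finite nonempty set N of agents (natural numbers) and
   a strict linear order R_i for each agent i in N (values of [pref]
   outside N are irrelevant). *)
Record profile (X : finType) := Profile {
  agents : {fset nat};
  agents_nonempty : agents != fset0;
  pref : nat -> rel X;
  pref_lin : forall i, i \in agents -> strict_linear_order (pref i)
}.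

Definition pos (X : finType) (P : profile X) (i : nat) (x : X) : nat :=
  (#|[set y | pref P i y x]|).+1.

(* normalised positional score of x on the restriction of P to C
   (s k is the k-th entry s_k of the scoring vector, k = 1..|X|) *)
Definition nscore (R : realFieldType) (X : finType) (s : nat -> R)
  (P : profile X) (C : {fset nat}) (x : X) : R :=
  (#|` C|%:R)^-1 * \sum_(i <- C) s (pos P i x).

Definition div_s (R : realFieldType) (X : finType) (s : nat -> R)
  (P : profile X) (x : X) (C : {fset nat}) : R :=
  let D := agents P `\` C in
  if (C != fset0) && (D != fset0)
  then `| nscore s P C x - nscore s P D x |
  else 0.

Definition decomps (N : {fset nat}) : {fset {fset {fset nat}}} :=
  [fset [fset C; N `\` C] | C in fpowerset N].

(* divergence of an unordered decomposition d = {C, N \ C}: div_s is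
   symmetric in its two parts, so we average it over the (one or two)
   members of d, which equals div_s(R, x, C, N \ C). *)
Definition dec_div (R : realFieldType) (X : finType) (s : nat -> R)
  (P : profile X) (x : X) (d : {fset {fset nat}}) : R :=
  (#|` d|%:R)^-1 * \sum_(C <- d) div_s s P x C.

Definition is_distribution (R : realFieldType) (N : {fset nat})
  (q : {fset {fset nat}} -> R) : Prop :=
  (forall d, d \in decomps N -> 0 <= q d) /\
  \sum_(d <- decomps N) q d = 1.

Definition exp_div (R : realFieldType) (X : finType) (s : nat -> R)
  (p : profile X -> X -> {fset {fset nat}} -> R) (P : profile X) (x : X) : R :=
  \sum_(d <- decomps (agents P)) p P x d * dec_div s P x d.

Definition score_DSF (R : realFieldType) (X : finType) (s : nat -> R)
  (p : profile X -> X -> {fset {fset nat}} -> R) (P : profile X) : {set X} :=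
  [set x | [forall y, exp_div s p P y <= exp_div s p P x]].

Definition same_position (X : finType) (P : profile X) (x : X) : Prop :=
  exists k, forall i, i \in agents P -> pos P i x = k.

From HB Require Import structures.
From mathcomp Require Import all_boot all_order all_algebra.
From mathcomp Require Import finmap.
Import Order.TTheory GRing.Theory Num.Theory.
Local Open Scope ring_scope.
Set Implicit Arguments.
Unset Strict Implicit.

(* If every agent ranks x in the same position k, every nonempty coalition
   gives x the same normalised score s_k, so every divergence of x vanishes
   and its expected divergence is 0. Expected divergences are nonnegative,
   so if x is nevertheless a maximiser, the maximum is 0 and every proposal
   attains it. *)

Lemma decomps_fsubset (N C : {fset nat}) (d : {fset {fset nat}}) :
  d \in decomps N -> C \in d -> (C `<=` N)%fset.
Proof.
case/imfsetP => C' /= C'N ->; rewrite !inE fpowersetE in C'N *.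
by case/orP => /eqP ->; rewrite ?fsubsetDl.
Qed.

Section ScoreBasedDSF.

Variables (R : realFieldType) (X : finType) (s : nat -> R).

Lemma nscore_const (P : profile X) (C : {fset nat}) (x : X) (k : nat) :
  C != fset0 -> (forall i, i \in C -> pos P i x = k) -> nscore s P C x = s k.
Proof.
move=> C0 posC; rewrite /nscore (eq_big_seq (fun=> s k)) => [|i /posC -> //].
rewrite big_const_seq count_predT iter_addr_0 -[s k *+ _]mulr_natl.
rewrite mulrA mulVf ?mul1r //.
by rewrite pnatr_eq0 cardfs_eq0.
Qed.

Lemma div_s_ge0 (P : profile X) (x : X) (C : {fset nat}) : 0 <= div_s s P x C.
Proof. by rewrite /div_s; case: ifP. Qed.

Lemma div_s_same_position (P : profile X) (x : X) (C : {fset nat}) :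
  same_position P x -> (C `<=` agents P)%fset -> div_s s P x C = 0.
Proof.
move=> [k posk] CN; rewrite /div_s; case: ifP => // /andP[C0 D0].
have posC i : i \in C -> pos P i x = k by move/(fsubsetP CN)/posk.
have posD i : i \in (agents P `\` C)%fset -> pos P i x = k.
  by rewrite inE => /andP[_ /posk].
by rewrite (nscore_const C0 posC) (nscore_const D0 posD) subrr normr0.
Qed.

Variable p : profile X -> X -> {fset {fset nat}} -> R.

Lemma exp_div_ge0 (P : profile X) (y : X) :
  is_distribution (agents P) (p P y) -> 0 <= exp_div s p P y.
Proof.
case=> p_ge0 _; rewrite /exp_div big_seq; apply: sumr_ge0 => d dN.
rewrite mulr_ge0 ?p_ge0 // mulr_ge0 ?invr_ge0 ?ler0n //.
by apply: sumr_ge0 => C _; apply: div_s_ge0.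
Qed.

Lemma exp_div_same_position (P : profile X) (x : X) :
  same_position P x -> exp_div s p P x = 0.
Proof.
move=> posx; rewrite /exp_div big_seq big1 // => d dN.
rewrite /dec_div big_seq big1 ?mulr0 // => C Cd.
exact/div_s_same_position/(decomps_fsubset dN Cd).
Qed.

Lemma score_DSF_eq_setT (P : profile X) (x : X) :
  (forall y, 0 <= exp_div s p P y) ->
  x \in score_DSF s p P -> exp_div s p P x = 0 -> score_DSF s p P = [set: X].
Proof.
move=> ge0 /[!inE] /forallP x_max x0; apply/setP => z; rewrite !inE.
have -> : exp_div s p P z = 0 by apply/eqP; rewrite eq_le ge0 andbT -x0 x_max.
by apply/forallP => y; rewrite -x0 x_max.
Qed.

End ScoreBasedDSF.

Theorem proposition2 (R : realFieldType) (X : finType) (s : nat -> R)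
  (p : profile X -> X -> {fset {fset nat}} -> R)
  (hp : forall (P : profile X) (x : X), is_distribution (agents P) (p P x)) :
  forall (P : profile X) (x : X), same_position P x ->
    x \notin score_DSF s p P \/ score_DSF s p P = [set: X].
Proof.
move=> P x posx; have [x_max|] := boolP (x \in score_DSF s p P); last by left.
right; apply: (score_DSF_eq_setT _ x_max (exp_div_same_position s p posx)) => y.
exact: exp_div_ge0.
Qed.
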